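(* Let $C>1$ and let $P$ be a probability measure on $[0,\infty)$. Consider the equation $G_{P,C}(\mu)=0$, $\mu\ge0$. (1) If $\mathbb{P}_{t\sim P}[t=0]<1-\frac1C$, the equation has exactly two solutions, namely $0$ and $\mu_{P,C}>0$. (2) If $\mathbb{P}_{t\sim P}[t=0]=1-\frac1C$, then $G_{P,C}(\mu)=0$ for all $0\le\mu\le\frac1Cm_P$, and $\mu_{P,C}=\frac1Cm_P$. (3) If $\mathbb{P}_{t\sim P}[t=0]>1-\frac1C$, the only solution is $0$, so $\mu_{P,C}=0$.
   Context: For $\mu\ge0$ define $G_{P,C}(\mu):=\mathbb{E}_{t\sim P}[\min\{t,C\mu\}]-\mu$. The $C$-clipped mean $\mu_{P,C}$ is the largest $\mu\ge0$ with $G_{P,C}(\mu)=0$. The $\frac1C$-median is $m_P:=\sup\{M\ge0:\mathbb{P}_{t\sim P}[t\ge M]\ge\frac1C\}$. *)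

From HB Require Import structures.
From mathcomp Require Import all_boot all_order all_algebra.
From mathcomp Require Import all_classical all_reals all_analysis.
Set Implicit Arguments. Unset Strict Implicit. Unset Printing Implicit Defensive.
Import Order.TTheory GRing.Theory Num.Theory.
Local Open Scope classical_set_scope.
Local Open Scope ring_scope.

Definition supported_nonneg (R : realType) (P : probability R R) : Prop :=
  P [set t : R | t < 0] = 0%E.

Definition G_clip (R : realType) (P : probability R R) (C mu : R) : \bar R :=
  ((\int[P]_(t in setT) (Order.min t (C * mu))%:E) - mu%:E)%E.

Definition is_clipped_mean (R : realType) (P : probability R R) (C m : R) : Prop :=
  0 <= m /\ G_clip P C m = 0%E /\
  (forall mu : R, 0 <= mu -> G_clip P C mu = 0%E -> mu <= m).

Definition median_C (R : realType) (P : probability R R) (C : R) : R :=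
  sup [set M : R | 0 <= M /\ (lee (C^-1)%:E (P [set t : R | M <= t]))].

From HB Require Import structures.
From mathcomp Require Import all_boot all_order all_algebra.
From mathcomp Require Import all_classical all_reals all_analysis.
From mathcomp Require Import measurable_realfun.
From mathcomp Require Import lra.
Import Order.TTheory GRing.Theory Num.Theory.
Import numFieldNormedType.Exports.

(* Since P lives on [0, +oo), E[min(t, x)] = h(x) := E[min(max(t, 0), x)] and
   G(mu) = h(C mu) - mu.  For 0 <= x <= y, pointwise bounds on the clipped integrand give
     (y - x) P[t >= y] <= h(y) - h(x) <= (y - x) P[t > x],
   so on [u, v] the function G has slope between C P[t >= C v] - 1 and C P[t > C u] - 1.
   Everything is decided by the initial slope C P[t > 0] - 1 = C (1 - 1/C - P[t = 0]):
   - if it is negative, G < 0 on ]0, +oo[;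
   - if it vanishes, G <= 0, and G(mu) = 0 exactly as long as P[t >= C mu] >= 1/C, i.e.
     up to C mu = m_P (at the endpoint by lower semicontinuity, since G drops with slope
     at most 1);
   - if it is positive, G > 0 near 0 and G < 0 far out (the tail of P vanishes), so G,
     which is Lipschitz, has a positive root; two positive roots u < v would force
     C P[t >= C u] >= 1, making G nondecreasing on [0, u], a contradiction. *)

Set Implicit Arguments.
Unset Strict Implicit.
Unset Printing Implicit Defensive.
Local Open Scope classical_set_scope.
Local Open Scope ring_scope.

Lemma measure_bigcup_gt d (T : measurableType d) (R : realType)
    (mu : {measure set T -> \bar R}) (F : (set T)^nat) (a : \bar R) :
  (forall n, measurable (F n)) -> nondecreasing_seq F ->
  (a < mu (\bigcup_n F n))%E -> exists n, (a < mu (F n))%E.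
Proof.
move=> mF ndF /=.
have ndmuF : nondecreasing_seq (mu \o F).
  by move=> n m nm; rewrite /= le_measure ?inE// -subsetEset; exact: ndF.
have -> : mu (\bigcup_n F n) = ereal_sup (range (mu \o F)).
  exact: cvg_unique (nondecreasing_cvg_mu mF (bigcupT_measurable _ mF) ndF)
    (ereal_nondecreasing_cvgn ndmuF).
move=> /ereal_sup_gt[_ [n _ <-] ?].
by exists n.
Qed.

Lemma lipschitz_continuous (R : realType) (f : R -> R) (L : R) : 0 < L ->
  (forall x y, `|f x - f y| <= L * `|x - y|) -> continuous f.
Proof.
move=> L0 Lf x; apply/cvgrPdist_lt => e e0.
apply: filterS (near_ball x (e / L) (divr_gt0 e0 L0)) => y /= xy.
by apply: le_lt_trans (Lf x y) _; rewrite -ltr_pdivlMl// mulrC.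
Qed.

Section rays.
Variable R : realType.

Lemma measurable_set_ge (x : R) : measurable [set t | x <= t].
Proof. by rewrite -set_itvcy. Qed.

Lemma measurable_set_gt (x : R) : measurable [set t | x < t].
Proof. by rewrite -set_itvoy. Qed.

Lemma measurable_set_lt (x : R) : measurable [set t | t < x].
Proof. by rewrite -set_itvNyo. Qed.

End rays.

#[local] Hint Resolve measurable_set_ge measurable_set_gt measurable_set_lt : core.

Section clipped_expectation.
Context (R : realType) (P : probability R R).

Definition prob (A : set R) : R := fine (P A).
Definition prob_ge (x : R) := prob [set t | x <= t].
Definition prob_gt (x : R) := prob [set t | x < t].

Lemma probE (A : set R) : measurable A -> P A = (prob A)%:E.
Proof. by move=> mA; rewrite fineK// fin_num_measure. Qed.

Lemma prob_ge0 (A : set R) : 0 <= prob A.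
Proof. exact: fine_ge0. Qed.

Lemma prob_le1 (A : set R) : measurable A -> prob A <= 1.
Proof. by move=> mA; rewrite -lee_fin -probE// probability_le1. Qed.

Lemma le_prob (A B : set R) : measurable A -> measurable B -> A `<=` B ->
  prob A <= prob B.
Proof. by move=> mA mB AB; rewrite -lee_fin -!probE// le_measure// inE. Qed.

Lemma prob_setC (A : set R) : measurable A -> prob (~` A) = 1 - prob A.
Proof. by move=> mA; rewrite /prob probability_setC// probE. Qed.

Lemma prob_gt_le_ge (x : R) : prob_gt x <= prob_ge x.
Proof. by apply: le_prob => // t /ltW. Qed.

Lemma prob_ge_nonincreasing (x y : R) : x <= y -> prob_ge y <= prob_ge x.
Proof. by move=> xy; apply: le_prob => // t /=; exact: le_trans. Qed.

Lemma prob_gt_le1 (x : R) : prob_gt x <= 1.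
Proof. exact: prob_le1. Qed.

Lemma prob_gt0E : supported_nonneg P -> prob_gt 0 = 1 - prob [set 0].
Proof.
move=> P_ge0; rewrite /prob_gt.
have -> : [set t : R | 0 < t] = ~` ([set t | t < 0] `|` [set 0]).
  apply/seteqP; split => t /=.
    by move=> t0 [/(lt_trans t0)|t00]; [rewrite ltxx|rewrite t00 ltxx in t0].
  by move/not_orP => [/negP]; rewrite -leNgt le_eqVlt => /orP[/eqP <-|].
have P0 : P ([set t | t < 0] `|` [set 0]) = P [set 0].
  transitivity (P [set t : R | (t < 0)%R] + P [set 0%R])%E; last by rewrite P_ge0 add0e.
  apply: measureU => //; first exact: measurable_set_lt.
  by apply/seteqP; split => // t [/= + t0]; rewrite t0 ltxx.
rewrite /prob probability_setC ?P0 ?probE//.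
by apply: measurableU => //; exact: measurable_set_lt.
Qed.

Lemma prob_ge_tail (e : R) : 0 < e -> exists M : R, 0 <= M /\ prob_ge M < e.
Proof.
move=> e0; pose F n := [set t : R | t < n%:R].
have ndF : nondecreasing_seq F.
  by move=> n m nm; rewrite subsetEset => t /= tn; apply: (lt_le_trans tn); rewrite ler_nat.
have FT : \bigcup_n F n = setT.
  by apply/seteqP; split => // t _; exists (Num.truncn t).+1 => //; exact: truncnS_gt.
have : ((1 - e)%:E < P (\bigcup_n F n))%E by rewrite FT probability_setT lte_fin; lra.
move=> /(measure_bigcup_gt (fun n => measurable_set_lt _) ndF)[n Fn].
have : ((1 - e)%:E < P (F n))%E := Fn.
rewrite /F probE// lte_fin.
have -> : [set t : R | t < n%:R] = ~` [set t | n%:R <= t].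
  by apply/seteqP; split => t /=; rewrite leNgt; [move=> -> | move/negP/negbNE].
rewrite prob_setC// => tail_small.
by exists n%:R; split => //; rewrite /prob_ge; lra.
Qed.

Lemma prob_ge_near0 (c : R) : c < prob_gt 0 -> exists2 x : R, 0 < x & c < prob_ge x.
Proof.
move=> c0; pose F n := [set t : R | n.+1%:R^-1 <= t].
have ndF : nondecreasing_seq F.
  by move=> n m nm; rewrite subsetEset => t /=; apply: le_trans; rewrite lef_pV2 ?posrE// ler_nat.
have FE : \bigcup_n F n = [set t | 0 < t].
  apply/seteqP; split => t /=.
    by move=> [n _ /=]; apply: lt_le_trans; rewrite invr_gt0.
  move=> t0; exists (Num.truncn t^-1) => //; rewrite /F /=.
  by rewrite -[leRHS]invrK lef_pV2 ?posrE ?invr_gt0//; exact/ltW/truncnS_gt.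
have : (c%:E < P (\bigcup_n F n))%E by rewrite FE probE.
move=> /(measure_bigcup_gt (fun n => measurable_set_ge _) ndF)[n Fn].
have : (c%:E < P (F n))%E := Fn.
by rewrite /F probE// lte_fin; exists n.+1%:R^-1; rewrite ?invr_gt0.
Qed.

Definition clip (x t : R) : R := Order.min (Order.max t 0) x.
Definition Eclip (x : R) : R := fine (\int[P]_(t in setT) (clip x t)%:E).

Lemma measurable_clip (x : R) : measurable_fun [set: R] (EFin \o clip x).
Proof. by apply/measurable_EFinP; apply: measurable_minr => //; exact: measurable_maxr. Qed.

Lemma clip_cases (x t : R) : 0 <= x ->
  [\/ t <= 0 /\ clip x t = 0, 0 <= t <= x /\ clip x t = t | x <= t /\ clip x t = x].
Proof.
move=> x0; rewrite /clip /Order.max /Order.min.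
case: (ltP t 0) => t0.
  case: (ltP 0 x) => x0'; first by apply: Or31; split=> //; lra.
  by apply: Or31; split; [lra|apply/le_anti; rewrite x0' x0].
by case: (ltP t x) => tx; [apply: Or32; split => //; lra|apply: Or33].
Qed.

Lemma clip_ge0 (x t : R) : 0 <= x -> 0 <= clip x t.
Proof. by move=> x0; case: (clip_cases t x0) => -[? ->]; lra. Qed.

Let in_set_predE (p : pred R) (t : R) : (t \in [set t | p t]) = p t.
Proof. by apply/idP/idP => [/set_mem|/mem_set]. Qed.

Lemma clip_increment (x y t : R) : 0 <= x -> x <= y ->
  (y - x) * \1_[set t | y <= t] t <= clip y t - clip x t <= (y - x) * \1_[set t | x < t] t.
Proof.
move=> x0 xy; rewrite !indicE (in_set_predE (>= y)) (in_set_predE (> x)).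
case: (clip_cases t x0) => -[? ->]; case: (clip_cases t (le_trans x0 xy)) => -[? ->];
  case: (leP y t); case: (ltP x t); rewrite /= ?mulr1 ?mulr0; lra.
Qed.

Lemma integral_scaled_indic (A : set R) (k : R) : measurable A -> 0 <= k ->
  (\int[P]_(t in setT) (k * \1_A t)%:E = (k * prob A)%:E)%E.
Proof.
move=> mA k0; under eq_integral do rewrite EFinM.
rewrite ge0_integralZl_EFin//; last exact/measurable_EFinP/measurable_indic.
by rewrite integral_indic// setIT EFinM; congr (_ * _)%E; exact: probE.
Qed.

Lemma integral_clip_split (x y : R) : 0 <= x -> x <= y ->
  (\int[P]_(t in setT) (clip y t)%:E = \int[P]_(t in setT) (clip x t)%:E
     + \int[P]_(t in setT) (clip y t - clip x t)%:E)%E.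
Proof.
move=> x0 xy; rewrite -ge0_integralD//.
- by apply: eq_integral => t _; rewrite -EFinD addrC subrK.
- by move=> t _; rewrite lee_fin clip_ge0.
- exact: measurable_clip.
- move=> t _; rewrite lee_fin; have /andP[+ _] := clip_increment t x0 xy.
  by apply: le_trans; rewrite mulr_ge0 ?subr_ge0 ?indicE.
- by apply/measurable_EFinP/measurable_funB; apply/measurable_EFinP; exact: measurable_clip.
Qed.

Lemma integral_clip_diff_bounds (x y : R) : 0 <= x -> x <= y ->
  (((y - x) * prob_ge y)%:E <= \int[P]_(t in setT) (clip y t - clip x t)%:E <=
   ((y - x) * prob_gt x)%:E)%E.
Proof.
move=> x0 xy; have yx : 0 <= y - x by rewrite subr_ge0.
have mdiff : measurable_fun [set: R] (EFin \o (fun t => clip y t - clip x t)).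
  by apply/measurable_EFinP/measurable_funB; apply/measurable_EFinP; exact: measurable_clip.
have mind A : measurable A -> measurable_fun [set: R] (EFin \o (fun t => (y - x) * \1_A t)).
  by move=> mA; apply/measurable_EFinP/measurable_funM => //; exact: measurable_indic.
rewrite -!integral_scaled_indic//; apply/andP; split; apply: ge0_le_integral => //.
- by move=> t _; rewrite lee_fin mulr_ge0// indicE.
- exact: mind (measurable_set_ge _).
- by move=> t _; rewrite lee_fin; case/andP: (clip_increment t x0 xy).
- move=> t _; rewrite lee_fin; have /andP[+ _] := clip_increment t x0 xy.
  by apply: le_trans; rewrite mulr_ge0// indicE.
- exact: mind (measurable_set_gt _).
- by move=> t _; rewrite lee_fin; case/andP: (clip_increment t x0 xy).
Qed.

Lemma integral_clip0 : (\int[P]_(t in setT) (clip 0 t)%:E = 0)%E.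
Proof.
apply: integral0_eq => t _; congr EFin; apply/le_anti.
by rewrite clip_ge0// andbT; case: (clip_cases t (lexx 0)) => -[? ->]; lra.
Qed.

Lemma integral_clipE (y : R) : 0 <= y ->
  (\int[P]_(t in setT) (clip y t)%:E = (Eclip y)%:E)%E.
Proof.
move=> y0; rewrite fineK// (integral_clip_split (lexx 0) y0) integral_clip0 add0e.
have /andP[lb ub] := integral_clip_diff_bounds (lexx 0) y0.
by rewrite fin_numElt (lt_le_trans _ lb) ?ltNyr// (le_lt_trans ub) ?ltry.
Qed.

Lemma Eclip0 : Eclip 0 = 0.
Proof. by rewrite /Eclip integral_clip0. Qed.

Lemma Eclip_increment (x y : R) : 0 <= x -> x <= y ->
  (y - x) * prob_ge y <= Eclip y - Eclip x <= (y - x) * prob_gt x.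
Proof.
move=> x0 xy; have y0 := le_trans x0 xy.
have := integral_clip_split x0 xy; rewrite !integral_clipE// => Ey.
have D : (\int[P]_(t in setT) (clip y t - clip x t)%:E = (Eclip y - Eclip x)%:E)%E.
  by rewrite EFinB Ey addeAC subee ?add0e.
by have := integral_clip_diff_bounds x0 xy; rewrite D !lee_fin.
Qed.

Lemma integral_minE (x : R) : supported_nonneg P -> 0 <= x ->
  (\int[P]_(t in setT) (Order.min t x)%:E = (Eclip x)%:E)%E.
Proof.
move=> P_ge0 x0; rewrite -integral_clipE//; apply: ae_eq_integral => //.
- by apply/measurable_EFinP; exact: measurable_minr.
- exact: measurable_clip.
exists [set t : R | t < 0]; split => [|//|t /= Nt]; first exact: measurable_set_lt.
by rewrite ltNge; apply/negP => t0; apply: Nt => _; rewrite /clip (max_idPl t0).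
Qed.

Lemma Eclip_lipschitz (x y : R) : 0 <= x -> 0 <= y -> `|Eclip x - Eclip y| <= `|x - y|.
Proof.
wlog yx : x y / y <= x.
  move=> H x0 y0; case: (leP y x) => [|/ltW] yx; first exact: H.
  by rewrite distrC (distrC x); exact: H.
move=> _ y0; have /andP[lb ub] := Eclip_increment y0 yx.
have lb0 : 0 <= (x - y) * prob_ge x by rewrite mulr_ge0 ?subr_ge0// prob_ge0.
have ub1 : (x - y) * prob_gt y <= x - y by rewrite ler_piMr ?subr_ge0// prob_gt_le1.
by rewrite !ger0_norm ?subr_ge0//; lra.
Qed.

End clipped_expectation.

Section clipped_equation.
Variables (R : realType) (P : probability R R) (C : R).
Hypothesis C1 : 1 < C.

Let C0 : 0 < C. Proof. exact: lt_trans ltr01 C1. Qed.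

Definition gclip (mu : R) : R := Eclip P (C * mu) - mu.

Lemma G_clipE (mu : R) : supported_nonneg P -> 0 <= mu -> G_clip P C mu = (gclip mu)%:E.
Proof. by move=> P_ge0 mu0; rewrite /G_clip integral_minE ?mulr_ge0 ?(ltW C0). Qed.

Lemma gclip0 : gclip 0 = 0.
Proof. by rewrite /gclip mulr0 Eclip0 subr0. Qed.

Lemma gclip_increment (u v : R) : 0 <= u -> u <= v ->
  (v - u) * (C * prob_ge P (C * v) - 1) <= gclip v - gclip u
    <= (v - u) * (C * prob_gt P (C * u) - 1).
Proof.
move=> u0 uv; have Cu0 : 0 <= C * u by rewrite mulr_ge0 ?(ltW C0).
have /andP[lb ub] := Eclip_increment P Cu0 (ler_wpM2l (ltW C0) uv).
by rewrite /gclip; apply/andP; split; nra.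
Qed.

Lemma gclip_ge (v : R) : 0 <= v -> v * (C * prob_ge P (C * v) - 1) <= gclip v.
Proof. by move=> v0; case/andP: (gclip_increment (lexx 0) v0); rewrite gclip0 !subr0. Qed.

Lemma gclip_le (v : R) : 0 <= v -> gclip v <= v * (C * prob_gt P 0 - 1).
Proof. by move=> v0; case/andP: (gclip_increment (lexx 0) v0); rewrite gclip0 mulr0 !subr0. Qed.

Lemma gclip_drop_le (u v : R) : 0 <= u -> u <= v -> gclip u - gclip v <= v - u.
Proof.
move=> u0 uv; have /andP[lb _] := gclip_increment u0 uv.
have : 0 <= C * prob_ge P (C * v) by rewrite mulr_ge0 ?prob_ge0 ?(ltW C0).
nra.
Qed.

Lemma gclip_lt0_subcritical (mu : R) : C * prob_gt P 0 < 1 -> 0 < mu -> gclip mu < 0.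
Proof. by move=> p mu0; apply: le_lt_trans (gclip_le (ltW mu0)) _; nra. Qed.

Lemma median_CE :
  median_C P C = sup [set M | 0 <= M /\ C^-1 <= prob_ge P M].
Proof.
rewrite /median_C; congr sup; apply/seteqP; split => M [M0 HM]; split => //.
  by rewrite -lee_fin -probE.
by rewrite /= probE// lee_fin.
Qed.

Lemma gclip_slope0E : supported_nonneg P ->
  C * prob_gt P 0 - 1 = C * (1 - C^-1 - prob P [set 0]).
Proof. by move=> P_ge0; rewrite prob_gt0E// !mulrBr mulr1 mulfV ?lt0r_neq0//; lra. Qed.

Section critical_mass.
Hypothesis mass_crit : C * prob_gt P 0 = 1.

Let S := [set M : R | 0 <= M /\ C^-1 <= prob_ge P M].
Let m := sup S.

Let S0 : S 0.
Proof.
split => //; apply: le_trans (prob_gt_le_ge P 0).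
by rewrite -[leRHS]mul1r -(mulVf (lt0r_neq0 C0)) -mulrA mass_crit mulr1.
Qed.

Let has_sup_S : has_sup S.
Proof.
have [M [M0 HM]] := prob_ge_tail P (ltac:(by rewrite invr_gt0) : 0 < C^-1).
split; first by exists 0.
exists M => M' [_ HM']; rewrite leNgt; apply/negP => /ltW /(prob_ge_nonincreasing P).
lra.
Qed.

Let medianE : median_C P C = m. Proof. exact: median_CE. Qed.

Lemma median_C_ge0 : 0 <= median_C P C.
Proof. by rewrite medianE; exact: sup_upper_bound has_sup_S _ S0. Qed.

Lemma gclip_le0 (mu : R) : 0 <= mu -> gclip mu <= 0.
Proof. by move=> mu0; have := gclip_le mu0; rewrite mass_crit subrr mulr0. Qed.

Lemma gclip_eq0_below (mu : R) : 0 <= mu -> C * mu <= median_C P C -> gclip mu = 0.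
Proof.
rewrite medianE => mu0 Cmu; apply/le_anti; rewrite gclip_le0//=.
have below nu : 0 <= nu -> C * nu < m -> 0 <= gclip nu.
  move=> nu0 Cnu.
  have [M [_ HM] mM] := sup_adherent (ltac:(by rewrite subr_gt0) : 0 < m - C * nu) has_sup_S.
  have CnuM : C * nu <= M by rewrite -/m in mM; lra.
  apply: le_trans (gclip_ge nu0); rewrite mulr_ge0// subr_ge0.
  rewrite -(mulfV (lt0r_neq0 C0)) ler_pM2l//.
  exact: le_trans HM (prob_ge_nonincreasing P CnuM).
rewrite leNgt; apply/negP => gneg.
(* Since [gclip] drops with slope at most 1, it cannot fall below its zeros on [0, mu[. *)
pose nu := mu + gclip mu / 2.
have := gclip_drop_le (lexx 0) mu0; rewrite gclip0 => gmu.
have nu0 : 0 <= nu by rewrite /nu; lra.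
have numu : nu < mu by rewrite /nu; lra.
have := gclip_drop_le nu0 (ltW numu).
have Cnu : C * nu < m by apply: lt_le_trans Cmu; rewrite ltr_pM2l.
have := below nu nu0 Cnu.
rewrite /nu; lra.
Qed.

Lemma gclip_lt0_above (mu : R) : 0 <= mu -> median_C P C < C * mu -> gclip mu < 0.
Proof.
have := median_C_ge0; rewrite medianE => m0 mu0 mCmu; pose M := (m + C * mu) / 2.
have M0 : 0 <= M by rewrite /M; lra.
have MCmu : M < C * mu by rewrite /M; lra.
have pM : C * prob_gt P M < 1.
  rewrite -(mulfV (lt0r_neq0 C0)) ltr_pM2l//; apply: le_lt_trans (prob_gt_le_ge P M) _.
  rewrite ltNge; apply/negP => HM.
  have : M <= m by exact: sup_upper_bound has_sup_S _ (conj M0 HM).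
  by rewrite /M; lra.
have u0 : 0 <= M / C by rewrite divr_ge0 ?(ltW C0).
have CuM : C * (M / C) = M by rewrite mulrCA mulfV ?lt0r_neq0 ?mulr1.
have uv : M / C < mu by rewrite -(ltr_pM2l C0) CuM.
have /andP[_] := gclip_increment u0 (ltW uv); rewrite CuM.
have := gclip_le0 u0.
have : 0 < mu - M / C by rewrite subr_gt0.
nra.
Qed.

End critical_mass.

Section supercritical_mass.
Hypothesis mass_sup : 1 < C * prob_gt P 0.

Lemma gclip_gt0_near0 : exists2 a : R, 0 < a & forall mu, 0 < mu -> mu <= a -> 0 < gclip mu.
Proof.
have pC : C^-1 < prob_gt P 0 by rewrite -(ltr_pM2l C0) mulfV ?lt0r_neq0.
have [x x0 px] := prob_ge_near0 pC.
exists (x / C); first by rewrite divr_gt0.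
move=> mu mu0 mux; apply: lt_le_trans (gclip_ge (ltW mu0)); rewrite mulr_gt0// subr_gt0.
rewrite -(mulfV (lt0r_neq0 C0)) ltr_pM2l//; apply: lt_le_trans px _.
by apply: prob_ge_nonincreasing; rewrite -(ler_pM2l C0) mulrCA mulfV ?lt0r_neq0 ?mulr1 in mux.
Qed.

Lemma gclip_lt0_far : exists2 b : R, 0 < b & gclip b < 0.
Proof.
have [M [M0 pM]] := prob_ge_tail P (ltac:(by rewrite invr_gt0) : 0 < C^-1).
pose a := M / C; pose d := 1 - C * prob_ge P M.
have a0 : 0 <= a by rewrite divr_ge0 ?(ltW C0).
have Ca : C * a = M by rewrite mulrCA mulfV ?lt0r_neq0 ?mulr1.
have d0 : 0 < d by rewrite subr_gt0 -(mulfV (lt0r_neq0 C0)) ltr_pM2l.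
(* Beyond [a] the slope of [gclip] is at most [-d]. *)
pose b := a + (`|gclip a| + 1) / d.
have ab : a < b by rewrite ltrDl divr_gt0// ltr_wpDl.
have db : d * (b - a) = `|gclip a| + 1 by rewrite /b addrC addKr mulrCA mulfV ?lt0r_neq0 ?mulr1.
exists b; first exact: le_lt_trans ab.
have /andP[_] := gclip_increment a0 (ltW ab); rewrite Ca.
have : C * prob_gt P M <= C * prob_ge P M by rewrite ler_pM2l// prob_gt_le_ge.
have := ler_norm (gclip a).
rewrite /d in db; nra.
Qed.

Lemma gclip_continuous : continuous (fun x : R => gclip (Num.max x 0)).
Proof.
apply: (@lipschitz_continuous _ _ (C + 1)) => [|x y]; first by rewrite addr_gt0.
have Cmax z : 0 <= C * Num.max z 0 by rewrite mulr_ge0 ?le_max ?lexx ?orbT ?(ltW C0).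
have maxxy : `|Num.max x 0 - Num.max y 0| <= `|x - y|.
  rewrite ler_norml; have xy := ler_norm (x - y); have yx := ler_norm (y - x).
  by rewrite distrC in yx; rewrite /Num.max; case: (ltP x 0); case: (ltP y 0) => *; lra.
have := Eclip_lipschitz P (Cmax x) (Cmax y).
rewrite -mulrBr normrM gtr0_norm// /gclip => HE.
rewrite (_ : _ - _ = (Eclip P (C * Num.max x 0) - Eclip P (C * Num.max y 0))
  - (Num.max x 0 - Num.max y 0)); last by lra.
apply: le_trans (ler_normB _ _) _.
rewrite mulrDl mul1r lerD// (le_trans HE)// ler_pM2l//.
Qed.

Lemma gclip_root_pos : exists2 c : R, 0 < c & gclip c = 0.
Proof.
have [a a0 ga] := gclip_gt0_near0; have [b b0 gb] := gclip_lt0_far.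
have ab : a <= b.
  by rewrite leNgt; apply/negP => ba; have := ga b b0 (ltW ba); lra.
have gapos := ga a a0 (lexx a).
have [||c] := @IVT R (fun x => gclip (Num.max x 0)) a b 0 ab.
- exact/continuous_subspaceT/gclip_continuous.
- by rewrite (max_l (ltW a0)) (max_l (ltW b0)) ge_min le_max (ltW gb) (ltW gapos) orbT.
rewrite in_itv /= => /andP[ac _]; rewrite max_l; last by apply: le_trans ac; exact: ltW.
by exists c => //; exact: lt_le_trans ac.
Qed.

Lemma gclip_root_pos_unique (u v : R) : 0 < u -> u < v -> gclip u = 0 -> gclip v = 0 -> False.
Proof.
move=> u0 uv gu gv; have vu : 0 < v - u by rewrite subr_gt0.
have /andP[_ ub] := gclip_increment (ltW u0) (ltW uv); rewrite gu gv subr0 in ub.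
(* The slope bound on [u, v] forces [1 <= C P[t >= C u]], so [gclip] is nondecreasing
   on [0, u], contradicting its positivity near 0. *)
have p1 : 1 <= C * prob_ge P (C * u).
  apply: le_trans (_ : C * prob_gt P (C * u) <= _); last by rewrite ler_pM2l// prob_gt_le_ge.
  nra.
have [a a0 ga] := gclip_gt0_near0.
pose e := Num.min a (u / 2).
have e0 : 0 < e by rewrite lt_min a0 divr_gt0.
have eu : e < u by rewrite gt_min; apply/orP; right; lra.
have /andP[lb _] := gclip_increment (ltW e0) (ltW eu); rewrite gu in lb.
have := ga e e0 (ltac:(by rewrite ge_min lexx)).
have : 0 < u - e by rewrite subr_gt0.
nra.
Qed.

End supercritical_mass.

End clipped_equation.

Theorem mainTheorem16 (R : realType) (C : R) (P : probability R R) :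
  1 < C -> supported_nonneg P ->
  (lte (P [set (0:R)]) (1 - C^-1)%:E ->
     exists m : R, is_clipped_mean P C m /\ 0 < m /\
       (forall mu : R, 0 <= mu -> (G_clip P C mu = 0%E <-> (mu = 0 \/ mu = m))))
  /\
  (P [set (0:R)] = (1 - C^-1)%:E ->
     (forall mu : R, 0 <= mu -> mu <= C^-1 * median_C P C -> G_clip P C mu = 0%E)
     /\ is_clipped_mean P C (C^-1 * median_C P C))
  /\
  (lte (1 - C^-1)%:E (P [set (0:R)]) ->
     (forall mu : R, 0 <= mu -> (G_clip P C mu = 0%E <-> mu = 0))
     /\ is_clipped_mean P C 0).
Proof.
move=> C1 P_ge0; have C0 : 0 < C := lt_trans ltr01 C1.
have G0 (mu : R) : 0 <= mu -> G_clip P C mu = 0%E <-> gclip P C mu = 0.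
  by move=> mu0; rewrite G_clipE//; split => [[]|->].
have slope0 := gclip_slope0E C1 P_ge0.
rewrite probE// !lte_fin; split; [|split] => mass0.
- have mass_sup : 1 < C * prob_gt P 0.
    by rewrite -subr_gt0 slope0 mulr_gt0// subr_gt0.
  have [c c0 gc] := gclip_root_pos C1 mass_sup.
  have roots (mu : R) : 0 <= mu -> gclip P C mu = 0 -> mu = 0 \/ mu = c.
    move=> mu0 gmu; case: (ltgtP mu c) => [muc|cmu|->]; [left|exfalso|by right].
      have [mu_gt0|mu_le0] := ltP 0 mu; last exact/le_anti/andP.
      by case: (gclip_root_pos_unique C1 mass_sup mu_gt0 muc gmu gc).
    exact (gclip_root_pos_unique C1 mass_sup c0 cmu gc gmu).
  exists c; split; [split; [exact: ltW|split]|split] => //.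
  + exact/(G0 _ (ltW c0)).
  + by move=> mu mu0 /(G0 _ mu0)/(roots _ mu0) [->|->]; rewrite ?(ltW c0).
  + move=> mu mu0; split => [/(G0 _ mu0)/(roots _ mu0)//|[->|->]].
      by rewrite G_clipE// gclip0.
    exact/(G0 _ (ltW c0)).
- have mass_crit : C * prob_gt P 0 = 1.
    by apply/eqP; rewrite -subr_eq0 slope0; case: mass0 => ->; rewrite subrr mulr0.
  have CVm : C * (C^-1 * median_C P C) = median_C P C by rewrite mulrA mulfV ?lt0r_neq0 ?mul1r.
  have below (mu : R) : 0 <= mu -> mu <= C^-1 * median_C P C -> G_clip P C mu = 0%E.
    move=> mu0 mum; apply/(G0 _ mu0)/(gclip_eq0_below C1 mass_crit mu0).
    by rewrite -CVm ler_pM2l.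
  have m0 : 0 <= C^-1 * median_C P C by rewrite mulr_ge0 ?invr_ge0 ?(ltW C0) ?median_C_ge0.
  split => //; split; [|split] => //; first exact: below.
  move=> mu mu0 /(G0 _ mu0) gmu; rewrite leNgt; apply/negP => mmu.
  have := gclip_lt0_above C1 mass_crit mu0; rewrite -CVm ltr_pM2l// gmu ltxx.
  by move/(_ mmu).
- have mass_sub : C * prob_gt P 0 < 1.
    by rewrite -subr_lt0 slope0 pmulr_rlt0// subr_lt0.
  have root0 (mu : R) : 0 <= mu -> G_clip P C mu = 0%E <-> mu = 0.
    move=> mu0; rewrite G0//; split => [gmu|->]; last exact: gclip0.
    apply/le_anti; rewrite mu0 andbT leNgt; apply/negP => /(gclip_lt0_subcritical C1 mass_sub).
    by rewrite gmu ltxx.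
  split => //; split; [|split] => //; first exact/(root0 _ (lexx 0)).
  by move=> mu mu0 /(root0 _ mu0) ->.
Qed.
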